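(* Let $G$ be a finite group with $d(G) \geq 2$, and let $1 \leq k \leq d(G)$. Assume that $G$ is $k$-flexible. Let $N$ be a normal subgroup of $G$ such that $d(G/N) = d(G)$. Then $G/N$ is $k$-flexible.
   Context: For a finite group $H$, $d(H)$ denotes the minimal size of a generating set of $H$. For an integer $1 \leq k \leq d(G)$, a finite group $G$ is called $k$-flexible if for any $x_1,\dots,x_k \in G$ with $d(\langle x_1,\dots,x_k\rangle)=k$ there exist $x_{k+1},\dots,x_{d(G)} \in G$ such that $\langle x_1,\dots,x_{d(G)}\rangle = G$. *)

From mathcomp Require Import all_boot all_fingroup.
Set Implicit Arguments. Unset Strict Implicit. Unset Printing Implicit Defensive.
Local Open Scope group_scope.

(* d(A): minimal size of a generating set of A (for A a group; junk #|A| bound otherwise).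
   Minimum over all X : {set gT} with <<X>> = A. *)
Definition gen_rank (gT : finGroupType) (A : {set gT}) : nat :=
  \big[minn/#|A|]_(X : {set gT} | <<X>> == A) #|X|.

Definition flexible (gT : finGroupType) (A : {set gT}) (k : nat) : Prop :=
  forall x : 'I_k -> gT,
    (forall i, x i \in A) ->
    gen_rank <<[set x i | i : 'I_k]>> = k ->
    exists y : 'I_(gen_rank A - k) -> gT,
      (forall j, y j \in A) /\
      <<[set x i | i : 'I_k] :|: [set y j | j : 'I_(gen_rank A - k)]>> = A.

From mathcomp Require Import all_boot all_fingroup.
Set Implicit Arguments. Unset Strict Implicit. Unset Printing Implicit Defensive.
Local Open Scope group_scope.

(* Lift x_1, ..., x_k to g_1, ..., g_k in G.  Since d never grows under a
   morphism, d(<g_1, ..., g_k>) >= d(<x_1, ..., x_k>) = k, and it is at most k,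
   so flexibility of G completes the g_i to a generating tuple of G of length
   d(G) = d(G/N), whose image generates G/N. *)

Lemma gen_rank_leq_card (gT : finGroupType) (A X : {set gT}) :
  <<X>> = A -> gen_rank A <= #|X|.
Proof.
move=> genX; rewrite /gen_rank.
have : X \in index_enum {set gT} by rewrite mem_index_enum.
elim: index_enum => [//|Y s IHs]; rewrite big_cons inE => /predU1P[<-|/IHs].
  by rewrite genX eqxx geq_minl.
by case: ifP => // _; apply: leq_trans (geq_minr _ _).
Qed.

Lemma gen_rank_witness (gT : finGroupType) (A : {group gT}) :
  exists2 X : {set gT}, <<X>> = A & #|X| = gen_rank A.
Proof.
rewrite /gen_rank; apply: (big_ind (fun n => exists2 X, <<X>> = A & #|X| = n)).
- by exists (A : {set gT}); first exact: genGid.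
- move=> m n [X genX <-] [Y genY <-].
  by case: leqP => _; [exists X | exists Y].
- by move=> X /eqP genX; exists X.
Qed.

Lemma gen_rank_imset_leq (gT : finGroupType) (I : finType) (x : I -> gT) :
  gen_rank <<[set x i | i : I]>> <= #|I|.
Proof.
exact: leq_trans (gen_rank_leq_card (erefl _)) (leq_imset_card _ _).
Qed.

Section Morphim.

Variables (aT rT : finGroupType) (D : {group aT}) (f : {morphism D >-> rT}).

Lemma gen_rank_morphim (H : {group aT}) :
  H \subset D -> gen_rank (f @* H) <= gen_rank H.
Proof.
move=> sHD; have [X genX <-] := gen_rank_witness H.
have sXD : X \subset D by rewrite -genX gen_subG in sHD.
apply: leq_trans (gen_rank_leq_card _) (_ : #|f @* X| <= _).
  by rewrite -morphim_gen // genX.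
by rewrite morphimEsub //; apply: leq_imset_card.
Qed.

Lemma morphim_imset (I : finType) (g : I -> aT) :
  (forall i, g i \in D) -> f @* [set g i | i : I] = [set f (g i) | i : I].
Proof.
move=> gD; rewrite morphimEsub -?imset_comp //.
by apply/subsetP=> _ /imsetP[i _ ->].
Qed.

Lemma morphim_lift (H : {set aT}) (I : finType) (x : I -> rT) :
  (forall i, x i \in f @* H) ->
  exists g : I -> aT, forall i, [/\ g i \in D, g i \in H & f (g i) = x i].
Proof.
move=> xH; have /fin_all_exists // : forall i, exists h : aT,
  [/\ h \in D, h \in H & f h = x i].
by move=> i; case/morphimP: (xH i) => h hD hH ->; exists h.
Qed.

Lemma flexible_morphim (G : {group aT}) (k : nat) :
  G \subset D -> gen_rank (f @* G) = gen_rank G ->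
  flexible G k -> flexible (f @* G) k.
Proof.
move=> sGD rank_fG flexG x xG rank_x.
have [g gP] := morphim_lift xG.
have gD i : g i \in D by case: (gP i).
have gG i : g i \in G by case: (gP i).
have im_g : [set x i | i : 'I_k] = f @* [set g i | i : 'I_k].
  by rewrite morphim_imset //; apply: eq_imset => i; case: (gP i).
have sgD : [set g i | i : 'I_k] \subset D by apply/subsetP=> _ /imsetP[i _ ->].
have rank_g : gen_rank <<[set g i | i : 'I_k]>> = k.
  apply/eqP; rewrite eqn_leq (leq_trans (gen_rank_imset_leq g)) ?card_ord //=.
  rewrite -{1}rank_x im_g -morphim_gen //.
  by apply: gen_rank_morphim; rewrite gen_subG.
have [y [yG genG]] := flexG g gG rank_g.
have yD j : y j \in D by apply: (subsetP sGD).
rewrite rank_fG; exists (fun j => f (y j)); split.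
  by move=> j; apply: mem_morphim.
rewrite im_g -morphim_imset // -morphimU -morphim_gen ?genG //.
by rewrite subUset sgD; apply/subsetP=> _ /imsetP[j _ ->].
Qed.

End Morphim.

Theorem lemma2p1 (gT : finGroupType) (G N : {group gT}) (k : nat) :
  2 <= gen_rank G -> 1 <= k <= gen_rank G -> flexible G k ->
  N <| G -> gen_rank (G / N) = gen_rank G ->
  flexible (G / N) k.
Proof.
move=> _ _ flexG nsNG rank_GN; rewrite quotientE in rank_GN *.
exact: flexible_morphim (normal_norm nsNG) rank_GN flexG.
Qed.
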